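(* Let $x_0\in\mathbb{R}$ and suppose $\displaystyle \lim_{n\to\infty}\frac{p_n(x_0)^2}{K_n(x_0,x_0)}=0$. Then $\limsup_{n\to\infty}K_n(x_0,x_0)^{1/n}\le1$, and in particular $\limsup_{n\to\infty}\big(p_n(x_0)^2+p_{n+1}(x_0)^2\big)^{1/n}\le1$.
   Context: Let $\rho$ be a probability measure on $\mathbb{R}$ with compact but infinite support, $p_n$ ($n\ge0$) its orthonormal polynomials (real coefficients, positive leading coefficient, $p_0=1$), and $K_n(x,y)=\sum_{j=0}^n p_j(x)p_j(y)$. *)

From Stdlib Require Import Reals Lra.
Open Scope R_scope.

(* A probability measure rho on R with compact infinite support is encoded by
   its moment sequence m k = \int x^k d rho.
   Polynomials are encoded by coefficient functions c : nat -> R together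
   with a degree bound d (coefficients of x^0 .. x^d). *)

Definition peval (c : nat -> R) (d : nat) (x : R) : R :=
  sum_f_R0 (fun k => c k * x ^ k) d.

(* the bilinear form  \int P Q d rho  for P = sum_{i<=d} c_i x^i,
   Q = sum_{j<=e} c'_j x^j *)
Definition mform (m : nat -> R) (c : nat -> R) (d : nat) (c' : nat -> R) (e : nat) : R :=
  sum_f_R0 (fun i => sum_f_R0 (fun j => c i * c' j * m (i + j)%nat) e) d.

(* m is the moment sequence of a probability measure on R with compact,
   infinite support:
   - total mass 1;
   - \int P^2 d rho > 0 for every nonzero polynomial P (infinite support);
   - |m_k| <= M^k for some M (compact support). *)
Definition cpt_inf_prob_moments (m : nat -> R) : Prop :=
  m 0%nat = 1 /\
  (forall (d : nat) (c : nat -> R),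
      (exists k, (k <= d)%nat /\ c k <> 0) -> 0 < mform m c d c d) /\
  (exists M : R, forall k, Rabs (m k) <= M ^ k).

Definition orthonormal_polys (m : nat -> R) (p : nat -> nat -> R) : Prop :=
  (forall n k, (n < k)%nat -> p n k = 0) /\
  (forall n, 0 < p n n) /\
  (forall n n', mform m (p n) n (p n') n' = if Nat.eqb n n' then 1 else 0).

Definition pe (p : nat -> nat -> R) (n : nat) (x : R) : R := peval (p n) n x.

Definition Kn (p : nat -> nat -> R) (n : nat) (x y : R) : R :=
  sum_f_R0 (fun j => pe p j x * pe p j y) n.

(* Write a_n = p_n(x0)^2, so that K_n(x0,x0) = a_0 + ... + a_n.  The hypothesis
   a_n / K_n -> 0 says that eventually K_n - K_(n-1) < (1 - 1/q) K_n for any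
   q > 1, i.e. K_n < q K_(n-1): the partial sums grow slower than any geometric
   sequence q^n, which is the statement limsup K_n^(1/n) <= 1.  Finally
   p_n^2 + p_(n+1)^2 <= K_(n+1). *)

From Stdlib Require Import Reals Lra Lia.
Open Scope R_scope.

Definition subexponential (g : nat -> R) : Prop :=
  forall q, 1 < q -> exists C, 0 < C /\ forall n, g n <= C * q ^ n.

Definition limsup_root_le_1 (g : nat -> R) : Prop :=
  forall eps : R, 0 < eps -> exists N : nat, forall n : nat, (N <= n)%nat ->
    Rpower (g n) (1 / INR n) <= 1 + eps.

Lemma exp_le_compat x y : x <= y -> exp x <= exp y.
Proof.
  intros [Hlt | ->]; [now left; apply exp_increasing | apply Rle_refl].
Qed.

Lemma ln_le_compat x y : 0 < x -> x <= y -> ln x <= ln y.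
Proof.
  intros Hx [Hlt | ->]; [now left; apply ln_increasing | apply Rle_refl].
Qed.

Lemma subexponential_le (g h : nat -> R) :
  (forall n, g n <= h n) -> subexponential h -> subexponential g.
Proof.
  intros Hgh Hh q Hq; destruct (Hh q Hq) as [C [HC HhC]].
  exists C; split; [exact HC|]; intro n.
  apply Rle_trans with (h n); auto.
Qed.

Lemma subexponential_shift (g : nat -> R) :
  subexponential g -> subexponential (fun n => g (S n)).
Proof.
  intros Hg q Hq; destruct (Hg q Hq) as [C [HC HgC]].
  exists (C * q); split; [nra|]; intro n.
  rewrite Rmult_assoc; apply HgC.
Qed.

Lemma subexponential_limsup_root_le_1 (g : nat -> R) :
  subexponential g -> limsup_root_le_1 g.
Proof.
  intros Hg eps Heps.
  set (L := ln (1 + eps)).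
  assert (HL : 0 < L) by (unfold L; rewrite <- ln_1; apply ln_increasing; lra).
  assert (HeL : exp L = 1 + eps) by (apply exp_ln; lra).
  clearbody L.
  destruct (Hg (exp (L / 2))) as [C [HC HgC]].
  { rewrite <- exp_0; apply exp_increasing; lra. }
  destruct (INR_unbounded (2 * Rabs (ln C) / L)) as [N HN].
  exists (S N); intros n Hn.
  assert (Hn0 : 0 < INR n) by (apply lt_0_INR; lia).
  assert (HNn : INR N <= INR n) by (apply le_INR; lia).
  unfold Rpower; rewrite <- HeL; apply exp_le_compat.
  destruct (Rle_or_lt (g n) 0) as [Hneg | Hpos].
  - (* Stdlib's ln is 0 on nonpositive arguments. *)
    unfold ln; destruct (Rlt_dec 0 (g n)); [exfalso; lra|].
    rewrite Rmult_0_r; lra.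
  - assert (Hln : ln (g n) <= ln C + INR n * (L / 2)).
    { pose proof (pow_lt (exp (L / 2)) n (exp_pos _)) as Hqn.
      rewrite <- (ln_exp (L / 2)), <- ln_pow, <- ln_mult by (auto using exp_pos).
      apply ln_le_compat; auto. }
    assert (HCn : 2 * Rabs (ln C) <= INR n * L).
    { assert (2 * Rabs (ln C) = 2 * Rabs (ln C) / L * L) by (field; lra). nra. }
    pose proof (Rle_abs (ln C)).
    apply Rle_trans with (1 / INR n * (INR n * L)); [|right; field; lra].
    apply Rmult_le_compat_l; [left; apply Rdiv_lt_0_compat|]; lra.
Qed.

Lemma eventually_geometric_bound (u : nat -> R) (q : R) (N : nat) :
  1 <= q -> 0 <= u N -> Un_growing u ->
  (forall n, (N <= n)%nat -> u (S n) <= q * u n) ->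
  forall n, u n <= u N * q ^ n.
Proof.
  intros Hq HuN Hu Hratio n; induction n as [|n IH].
  - simpl; rewrite Rmult_1_r; apply Rge_le, growing_prop; [exact Hu | lia].
  - destruct (Compare_dec.le_lt_dec N n) as [HNn | HnN].
    + specialize (Hratio n HNn); simpl; nra.
    + pose proof (pow_R1_Rle q (S n) Hq).
      assert (u (S n) <= u N) by (apply Rge_le, growing_prop; [exact Hu | lia]).
      nra.
Qed.

Lemma partial_sums_subexponential (a : nat -> R) :
  (forall k, 0 <= a k) -> 0 < a 0%nat ->
  Un_cv (fun n => a n / sum_f_R0 a n) 0 ->
  subexponential (sum_f_R0 a).
Proof.
  intros Ha Ha0 Hcv q Hq.
  assert (Hsum_pos : forall n, 0 < sum_f_R0 a n).
  { intro n; induction n as [|n IH]; simpl; [exact Ha0 | pose proof (Ha (S n)); lra]. }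
  assert (Hgrowing : Un_growing (sum_f_R0 a)) by (intro n; simpl; pose proof (Ha (S n)); lra).
  destruct (Hcv (1 - / q)) as [N HN].
  { apply Rlt_0_minus; rewrite <- Rinv_1; apply Rinv_lt_contravar; lra. }
  exists (sum_f_R0 a N); split; [apply Hsum_pos|].
  apply eventually_geometric_bound; [lra | left; apply Hsum_pos | exact Hgrowing |].
  intros n Hn.
  specialize (HN (S n) ltac:(lia)); unfold R_dist in HN; rewrite Rminus_0_r in HN.
  pose proof (Hsum_pos (S n)) as HS.
  assert (Hsmall : a (S n) < (1 - / q) * sum_f_R0 a (S n)).
  { apply (Rmult_lt_reg_r (/ sum_f_R0 a (S n))); [now apply Rinv_0_lt_compat|].
    rewrite Rmult_assoc, Rinv_r by lra.
    eapply Rle_lt_trans; [apply Rle_abs | rewrite Rmult_1_r; exact HN]. }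
  change (sum_f_R0 a (S n)) with (sum_f_R0 a n + a (S n)) in *.
  assert (Hscaled : q * a (S n) < (q - 1) * (sum_f_R0 a n + a (S n))).
  { replace (q - 1) with (q * (1 - / q)) by (field; lra).
    rewrite Rmult_assoc; apply Rmult_lt_compat_l; lra. }
  lra.
Qed.

Theorem proposition3p1 (m : nat -> R) (p : nat -> nat -> R) (x0 : R) :
  cpt_inf_prob_moments m ->
  orthonormal_polys m p ->
  Un_cv (fun n => (pe p n x0) ^ 2 / Kn p n x0 x0) 0 ->
  (forall eps : R, 0 < eps -> exists N : nat, forall n : nat, (N <= n)%nat ->
     Rpower (Kn p n x0 x0) (1 / INR n) <= 1 + eps) /\
  (forall eps : R, 0 < eps -> exists N : nat, forall n : nat, (N <= n)%nat ->
     Rpower ((pe p n x0) ^ 2 + (pe p (S n) x0) ^ 2) (1 / INR n) <= 1 + eps).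
Proof.
  intros _ [_ [Hlead _]] Hcv.
  set (a := fun n => pe p n x0 ^ 2).
  assert (HK : forall n, Kn p n x0 x0 = sum_f_R0 a n).
  { intro n; apply sum_eq; intros i _; unfold a; ring. }
  assert (HS : subexponential (sum_f_R0 a)).
  { apply partial_sums_subexponential.
    - intro k; apply pow2_ge_0.
    - unfold a, pe, peval; simpl; specialize (Hlead 0%nat); nra.
    - intros e He; destruct (Hcv e He) as [N HN].
      exists N; intros n Hn; rewrite <- HK; exact (HN n Hn). }
  split; apply subexponential_limsup_root_le_1.
  - apply subexponential_le with (sum_f_R0 a); [intro n; rewrite HK; lra | exact HS].
  - apply subexponential_le with (fun n => sum_f_R0 a (S n)); [|now apply subexponential_shift].
    intro n; change (a n + a (S n) <= sum_f_R0 a n + a (S n)).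
    destruct n as [|n]; simpl; [lra | pose proof (cond_pos_sum a n (fun k => pow2_ge_0 _)); lra].
Qed.
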